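(* Let $P\subseteq\mathbb{R}^d$ and $P'\subseteq\mathbb{R}^{d'}$ be nonempty polyhedra such that $P'$ is the image of a face of $P$ under an affine map. If $P$ admits a MILEF of complexity $(m,k)$, then $P'$ also admits a MILEF of complexity $(m,k)$.
   Context: A MILEF of complexity $(m,k)$ of a convex set $P\subseteq\mathbb{R}^d$ is a triple $(Q,\sigma,\pi)$ where $Q\subseteq\mathbb{R}^\ell$ is a polyhedron with at most $m$ facets, and $\sigma:\mathbb{R}^\ell\to\mathbb{R}^k$, $\pi:\mathbb{R}^\ell\to\mathbb{R}^d$ are affine maps with $P=\operatorname{conv}(\pi(Q\cap\sigma^{-1}(\mathbb{Z}^k)))$. *)

From HB Require Import structures.
From mathcomp Require Import all_boot all_order all_algebra.
From mathcomp Require Import classical_sets reals.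
Set Implicit Arguments. Unset Strict Implicit. Unset Printing Implicit Defensive.
Import Order.TTheory GRing.Theory Num.Theory.
Local Open Scope ring_scope.
Local Open Scope classical_set_scope.

Section Defs.
Variable R : realType.

Definition polyhedron (n : nat) (P : set 'cV[R]_n) : Prop :=
  exists (p : nat) (A : 'M[R]_(p, n)) (b : 'cV[R]_p),
    P = [set x | forall i : 'I_p, (A *m x) i 0 <= b i 0].

Definition is_affine (n p : nat) (f : 'cV[R]_n -> 'cV[R]_p) : Prop :=
  exists (M : 'M[R]_(p, n)) (c : 'cV[R]_p), forall x, f x = M *m x + c.

(* F is a face of P: F = P ∩ {c^T x = delta} for a valid inequality c^T x <= delta
   (this includes P itself and possibly the empty face). *)
Definition is_face (n : nat) (P F : set 'cV[R]_n) : Prop :=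
  exists (c : 'cV[R]_n) (delta : R),
    (forall x, P x -> (c^T *m x) 0 0 <= delta) /\
    F = [set x | P x /\ (c^T *m x) 0 0 = delta].

(* S contains k+1 affinely independent points *)
Definition aff_indep_pts (n : nat) (S : set 'cV[R]_n) (k : nat) : Prop :=
  exists (x0 : 'cV[R]_n) (X : 'M[R]_(n, k)),
    S x0 /\ (forall j : 'I_k, S (x0 + col j X)) /\ \rank X = k.

Definition has_dim (n : nat) (S : set 'cV[R]_n) (k : nat) : Prop :=
  aff_indep_pts S k /\ ~ aff_indep_pts S k.+1.

Definition is_facet (n : nat) (Q F : set 'cV[R]_n) : Prop :=
  is_face Q F /\ exists k : nat, has_dim Q k.+1 /\ has_dim F k.

Definition at_most_facets (n : nat) (Q : set 'cV[R]_n) (m : nat) : Prop :=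
  exists fs : 'I_m -> set 'cV[R]_n, forall F, is_facet Q F -> exists i, F = fs i.

Definition conv (n : nat) (S : set 'cV[R]_n) : set 'cV[R]_n :=
  [set x | exists (N : nat) (lam : 'I_N -> R) (pts : 'I_N -> 'cV[R]_n),
     (forall i, S (pts i)) /\ (forall i, 0 <= lam i) /\
     \sum_(i < N) lam i = 1 /\ x = \sum_(i < N) lam i *: pts i].

Definition intvec (k : nat) : set 'cV[R]_k :=
  [set v | forall i : 'I_k, v i 0 \is a Num.int].

Definition has_MILEF (d m k : nat) (P : set 'cV[R]_d) : Prop :=
  exists (l : nat) (Q : set 'cV[R]_l) (sigma : 'cV[R]_l -> 'cV[R]_k)
         (pi : 'cV[R]_l -> 'cV[R]_d),
    polyhedron Q /\ at_most_facets Q m /\ is_affine sigma /\ is_affine pi /\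
    P = conv (pi @` (Q `&` (sigma @^-1` @intvec k))).

End Defs.

From HB Require Import structures.
From mathcomp Require Import all_boot all_order all_algebra.
From mathcomp Require Import boolp classical_sets reals.
From mathcomp Require Import zify ring lra.
Set Implicit Arguments. Unset Strict Implicit. Unset Printing Implicit Defensive.
Import Order.TTheory GRing.Theory Num.Theory.
Local Open Scope ring_scope.
Local Open Scope classical_set_scope.

(* If (Q, sigma, pi) is a MILEF of P and F = P ∩ {c^T x = g} is a face of P,
   then (Q ∩ pi^-1 {c^T x = g}, sigma, f ∘ pi) is a MILEF of f(F): a valid
   inequality of a convex hull cuts out exactly the hull of the generating
   points on its hyperplane, and convex hulls commute with affine maps.  The
   one real point is that cutting Q by a hyperplane H does not create facets.
   Take a description of Q with the fewest inequalities.  For a facet G of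
   Q ∩ H, perturbing a relative interior point of G away from a point z of
   Q ∩ H outside G shows that some inequality j is tight on G but not at z;
   by minimality inequality j defines a facet F_j of Q, and comparing
   dimensions gives G = F_j ∩ H. *)

Section Polyhedra.
Variable R : realType.

Definition hpoly n p (A : 'M[R]_(p, n)) (b : 'cV[R]_p) : set 'cV[R]_n :=
  [set x | forall i, (A *m x) i 0 <= b i 0].

Definition hyperplane n (c : 'cV[R]_n) (g : R) : set 'cV[R]_n :=
  [set x | (c^T *m x) 0 0 = g].

Lemma mxrank_col_freeP n k (X : 'M[R]_(n, k)) :
  \rank X = k <-> (forall w : 'cV[R]_k, X *m w = 0 -> w = 0).
Proof.
rewrite -mxrank_tr; split=> [rX w Xw | Xinj].
  have free : row_free X^T by rewrite /row_free rX.
  apply: trmx_inj; apply/eqP; rewrite trmx0 -(mulmx_free_eq0 _ free).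
  by rewrite -trmx_mul Xw trmx0.
apply/eqP; apply: inj_row_free => v vX; apply: trmx_inj; rewrite trmx0.
by apply: Xinj; rewrite -[X]trmxK -trmx_mul vX trmx0.
Qed.

Lemma mulmxD_entry n p r (A : 'M[R]_(p, n)) (x y : 'M[R]_(n, r)) i l :
  (A *m (x + y)) i l = (A *m x) i l + (A *m y) i l.
Proof. by rewrite mulmxDr !mxE. Qed.

Lemma mulmxDZ_entry n p r (A : 'M[R]_(p, n)) (x y : 'M[R]_(n, r)) e i l :
  (A *m (x + e *: y)) i l = (A *m x) i l + e * (A *m y) i l.
Proof. by rewrite mulmxDr -scalemxAr !mxE. Qed.

Lemma mulmxB_entry n p r (A : 'M[R]_(p, n)) (x y : 'M[R]_(n, r)) i l :
  (A *m (x - y)) i l = (A *m x) i l - (A *m y) i l.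
Proof. by rewrite mulmxBr !mxE. Qed.

Lemma mulmx_col_entry m n p (A : 'M[R]_(m, n)) (B : 'M[R]_(n, p)) i j :
  (A *m B) i j = (A *m col j B) i 0.
Proof. by rewrite colE mulmxA -colE [in RHS]mxE. Qed.

Lemma mulmx_mid_entry n p r (A : 'M[R]_(p, n)) (x y : 'M[R]_(n, r)) i l :
  (A *m (2^-1 *: (x + y))) i l = 2^-1 * ((A *m x) i l + (A *m y) i l).
Proof. by rewrite -scalemxAr mulmxDr !mxE. Qed.

Lemma hyperplane_mid n (c : 'cV[R]_n) g x y :
  hyperplane c g x -> hyperplane c g y -> hyperplane c g (2^-1 *: (x + y)).
Proof. by rewrite /hyperplane /= mulmx_mid_entry => -> ->; field. Qed.

Lemma hpoly_mid n p (A : 'M[R]_(p, n)) b x y :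
  hpoly A b x -> hpoly A b y -> hpoly A b (2^-1 *: (x + y)).
Proof.
by move=> hx hy i; rewrite mulmx_mid_entry; have := hx i; have := hy i; lra.
Qed.

Lemma aff_indep_pts_sub n (S T : set 'cV[R]_n) k :
  S `<=` T -> aff_indep_pts S k -> aff_indep_pts T k.
Proof.
move=> ST [x0 [X [Sx0 [SX rX]]]]; exists x0, X.
by split; [exact: ST | split=> // j; exact: ST].
Qed.

Lemma aff_indep_ptsS n (S : set 'cV[R]_n) k :
  aff_indep_pts S k.+1 -> aff_indep_pts S k.
Proof.
move=> [x0 [X [Sx0 [SX rX]]]].
pose X1 : 'M[R]_(n, 1 + k) := X.
exists x0, (rsubmx X1); split=> //; split.
  move=> j; have -> : col j (rsubmx X1) = col (rshift 1 j) X.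
    by apply/matrixP => i l; rewrite !mxE.
  exact: SX.
apply/mxrank_col_freeP => w Xw.
have /(_ (col_mx 0 w)) := proj1 (mxrank_col_freeP X1) rX.
rewrite -[X1]hsubmxK mul_row_col mulmx0 add0r => /(_ Xw) w0.
by move/(congr1 dsubmx): w0; rewrite col_mxKd => ->; apply/matrixP => i j; rewrite !mxE.
Qed.

Lemma aff_indep_pts_le n (S : set 'cV[R]_n) r t :
  (t <= r)%N -> aff_indep_pts S r -> aff_indep_pts S t.
Proof.
elim: r => [|r IH]; first by rewrite leqn0 => /eqP ->.
rewrite leq_eqVlt ltnS => /orP[/eqP -> // | tr] /aff_indep_ptsS; exact: IH.
Qed.

Lemma aff_indep_pts_bound n (S : set 'cV[R]_n) k : aff_indep_pts S k -> (k <= n)%N.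
Proof. by move=> [x0 [X [_ [_ <-]]]]; exact: rank_leq_row. Qed.

Lemma has_dim_geq n (S : set 'cV[R]_n) j :
  aff_indep_pts S j -> exists2 k, has_dim S k & (j <= k)%N.
Proof.
move=> Sj; have [e] := ubnP (n - j)%N; elim: e j Sj => [|e IH] // j Sj ej.
have [Sj1|nSj1] := pselect (aff_indep_pts S j.+1); last by exists j.
have [|k Sk jk] := IH j.+1 Sj1; last by exists k => //; exact: ltnW.
by have := aff_indep_pts_bound Sj1; lia.
Qed.

Lemma aff_indep_pts_off_hyperplane n (G S : set 'cV[R]_n) (c : 'cV[R]_n) g s z :
  aff_indep_pts G s -> G `<=` S -> G `<=` hyperplane c g ->
  S z -> ~ hyperplane c g z -> aff_indep_pts S s.+1.
Proof.
move=> [x0 [X [Gx0 [GX rX]]]] GS Gc Sz cz.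
pose X2 : 'M[R]_(n, 1 + s) := row_mx (z - x0) X.
exists x0, X2; split; first exact: GS.
split.
  move=> j; rewrite -(splitK (j : 'I_(1 + s))); case: (split _) => j' /=.
    rewrite (_ : col _ X2 = z - x0); first by rewrite addrC subrK.
    by apply/matrixP => i l; rewrite mxE (row_mxEl (z - x0) X) (ord1 l) (ord1 j').
  rewrite (_ : col _ X2 = col j' X); first exact/GS/GX.
  by apply/matrixP => i l; rewrite mxE (row_mxEr (z - x0) X) mxE.
have cX : c^T *m X = 0.
  apply/matrixP => i j; rewrite [RHS]mxE mulmx_col_entry (ord1 i).
  have -> : col j X = (x0 + col j X) - x0 by rewrite addrAC subrr add0r.
  by rewrite mulmxB_entry (Gc _ (GX j)) (Gc _ Gx0) subrr.
apply/(mxrank_col_freeP X2) => w Xw.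
rewrite -[w]vsubmxK mul_row_col in Xw *.
have u0 : usubmx w = 0.
  move/(congr1 (mulmx c^T)): Xw; rewrite mulmx0 mulmxDr !mulmxA cX mul0mx addr0.
  move=> /matrixP /(_ 0 0); rewrite [usubmx w]mx11_scalar mul_mx_scalar.
  rewrite [LHS]mxE [RHS]mxE mulmxB_entry (Gc _ Gx0) => /eqP.
  rewrite mulf_eq0 subr_eq0 => /orP[/eqP -> | /eqP cz']; last by case: cz.
  by apply/matrixP => i j; rewrite !mxE mul0rn.
rewrite u0 mulmx0 add0r in Xw.
by rewrite u0 (proj1 (mxrank_col_freeP X) rX _ Xw) col_mx0.
Qed.

Lemma aff_indep_pts_const_mxrank n p (S : set 'cV[R]_n) (B : 'M[R]_(p, n)) r :
  (forall x y, S x -> S y -> B *m x = B *m y) -> aff_indep_pts S r ->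
  (\rank B + r <= n)%N.
Proof.
move=> Bconst [x0 [Y [Sx0 [SY <-]]]].
have BY : B *m Y = 0.
  apply/matrixP => i l; rewrite [RHS]mxE mulmx_col_entry.
  have -> : col l Y = (x0 + col l Y) - x0 by rewrite addrAC subrr add0r.
  by rewrite mulmxB_entry (Bconst _ x0 (SY l) Sx0) subrr.
have : (Y^T <= kermx B^T)%MS by apply/sub_kermxP; rewrite -trmx_mul BY trmx0.
move/mxrankS; rewrite mxrank_ker !mxrank_tr.
by have := rank_leq_col B; lia.
Qed.

Lemma mulmx_row_entry n p (A : 'M[R]_(p, n)) j (x : 'cV[R]_n) :
  ((row j A)^T^T *m x) 0 0 = (A *m x) j 0.
Proof. by rewrite trmxK -row_mul mxE. Qed.

Lemma hyperplane_rowE n p (A : 'M[R]_(p, n)) j g x :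
  hyperplane (row j A)^T g x = ((A *m x) j 0 = g).
Proof. by rewrite /hyperplane /= mulmx_row_entry. Qed.

Lemma row_mulmx0_entry n p r (A : 'M[R]_(p, n)) (X : 'M[R]_(n, r)) i l :
  row i A *m X = 0 -> (A *m col l X) i 0 = 0.
Proof.
move=> AX0; rewrite -mulmx_col_entry.
have -> : (A *m X) i l = (row i A *m X) 0 l by rewrite -row_mul [RHS]mxE.
by rewrite AX0 mxE.
Qed.

Lemma exists_perturbation_lt0 (I : finType) (P : I -> Prop) (u v : I -> R) :
  (forall i, P i -> u i < 0) ->
  exists2 e : R, 0 < e & forall i, P i -> u i + e * v i < 0.
Proof.
move=> Pu; pose S := \sum_i `|v i| / `|u i|.
have S_ge0 : 0 <= S by apply: sumr_ge0 => i _; rewrite divr_ge0.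
exists (1 + S)^-1; first by rewrite invr_gt0; lra.
move=> i Pi; have ui := Pu i Pi; set e := (1 + S)^-1.
have e_gt0 : 0 < e by rewrite invr_gt0; lra.
have eS : e * (1 + S) = 1 by rewrite mulVf //; lra.
have uabs : `|u i| = - u i by rewrite ltr0_norm.
have vS : `|v i| <= S * - u i.
  rewrite -uabs -ler_pdivrMr ?normr_gt0 ?ltr0_neq0 //.
  by rewrite /S (bigD1 i) //= lerDl; apply: sumr_ge0 => l _; rewrite divr_ge0.
have ve : e * v i <= e * `|v i| by rewrite ler_pM2l // ler_norm.
nra.
Qed.

(* Averaging with a point strict in row [i] makes row [i] strict and keeps
   strict every row that already was, so strictness accumulates row by row. *)
Lemma exists_relint_point n p (S : set 'cV[R]_n) (A : 'M[R]_(p, n)) b :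
  (forall x y, S x -> S y -> S (2^-1 *: (x + y))) -> S !=set0 -> S `<=` hpoly A b ->
  exists2 x, S x & forall i, (exists2 y, S y & (A *m y) i 0 < b i 0) ->
                             (A *m x) i 0 < b i 0.
Proof.
move=> Smid [x0 Sx0] SA.
suff [x Sx xs] : exists2 x, S x & forall i, i \in enum 'I_p ->
    (exists2 y, S y & (A *m y) i 0 < b i 0) -> (A *m x) i 0 < b i 0.
  by exists x => // i; apply: xs; rewrite mem_enum.
elim: (enum 'I_p) => [|i0 s [x Sx xs]]; first by exists x0.
have [[y Sy yi0] | ni0] := pselect (exists2 y, S y & (A *m y) i0 0 < b i0 0).
  exists (2^-1 *: (x + y)); first exact: Smid.
  move=> i; rewrite in_cons mulmx_mid_entry => /orP[/eqP -> _ | ins ex].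
    by have := SA _ Sx i0; lra.
  by have := xs i ins ex; have := SA _ Sy i; lra.
exists x => // i; rewrite in_cons => /orP[/eqP -> ex | ]; last exact: xs.
by case: ni0.
Qed.

Lemma hpoly_perturb n p (A : 'M[R]_(p, n)) b w r (X : 'M[R]_(n, r)) :
  hpoly A b w -> (forall i, (A *m w) i 0 < b i 0 \/ row i A *m X = 0) ->
  exists2 e, 0 < e & forall l, hpoly A b (w + e *: col l X).
Proof.
move=> Aw tight.
have [e e_gt0 He] : exists2 e : R, 0 < e & forall il : 'I_p * 'I_r,
    (A *m w) il.1 0 < b il.1 0 -> (A *m w) il.1 0 - b il.1 0 + e * (A *m X) il.1 il.2 < 0.
  by apply: exists_perturbation_lt0 => il; rewrite subr_lt0.
exists e => // l i; rewrite mulmxDZ_entry.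
have [wi | /row_mulmx0_entry ->] := tight i; last by rewrite mulr0 addr0.
by have := He (i, l) wi; rewrite /= -mulmx_col_entry; lra.
Qed.

Lemma mxrank_kernel n p (M : 'M[R]_(p, n)) :
  exists r (X : 'M[R]_(n, r)), [/\ M *m X = 0, \rank X = r & r = (n - \rank M)%N].
Proof.
pose K := kermx M^T; exists (\rank K), (row_base K)^T; split.
- apply: trmx_inj; rewrite trmx_mul trmxK trmx0; apply/sub_kermxP.
  by rewrite eq_row_base submx_refl.
- by rewrite mxrank_tr; apply/eqP; exact: row_base_free.
- by rewrite mxrank_ker mxrank_tr.
Qed.

Definition minimal_hpoly n p (A : 'M[R]_(p, n)) (b : 'cV[R]_p) :=
  forall p' (A' : 'M[R]_(p', n)) b', hpoly A b = hpoly A' b' -> (p <= p')%N.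

Lemma polyhedron_minimal_hpoly n (Q : set 'cV[R]_n) : polyhedron Q ->
  exists p (A : 'M[R]_(p, n)) b, Q = hpoly A b /\ minimal_hpoly A b.
Proof.
move=> [p0 [A0 [b0 QE]]].
have ex : exists p, `[< exists (A : 'M[R]_(p, n)) b, Q = hpoly A b >].
  by exists p0; apply/asboolP; exists A0, b0.
case: (ex_minnP ex) => p /asboolP [A [b QA]] minp.
exists p, A, b; split=> // p' A' b' AA'; apply: minp; apply/asboolP.
by exists A', b'; rewrite QA AA'.
Qed.

Lemma minimal_hpoly_violator n p (A : 'M[R]_(p, n)) b j : minimal_hpoly A b ->
  exists y : 'cV[R]_n, (forall i, i != j -> (A *m y) i 0 <= b i 0) /\ b j 0 < (A *m y) j 0.
Proof.
move=> minA; apply: contrapT => nex.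
have rowE' (x : 'cV[R]_n) i : (row' j A *m x) i 0 = (A *m x) (lift j i) 0.
  by rewrite !mxE; apply: eq_bigr => k _; rewrite mxE.
suff /minA : hpoly A b = hpoly (row' j A) (row' j b).
  by case: p j {A b minA nex rowE'} => [[] | p _] //=; rewrite ltnn.
apply/seteqP; split=> x Ax i; first by rewrite rowE' [row' j b _ _]mxE; exact: Ax.
have [i' -> | ->] := unliftP j i; first by have := Ax i'; rewrite rowE' [row' j b _ _]mxE.
rewrite leNgt; apply/negP => xj; apply: nex; exists x; split=> // i0 i0j.
have [i' e | e] := unliftP j i0; last by rewrite e eqxx in i0j.
by have := Ax i'; rewrite rowE' [row' j b _ _]mxE e.
Qed.

Lemma minimal_hpoly_row_face_point n p (A : 'M[R]_(p, n)) b j z :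
  minimal_hpoly A b -> hpoly A b z -> (A *m z) j 0 < b j 0 ->
  exists w, [/\ hpoly A b w, (A *m w) j 0 = b j 0 &
    forall i, i != j -> (exists2 y, hpoly A b y & (A *m y) i 0 < b i 0) ->
              (A *m w) i 0 < b i 0].
Proof.
move=> minA Az zj.
have [y [yA yj]] := minimal_hpoly_violator j minA.
have [xr xrA xrs] := exists_relint_point (@hpoly_mid n p A b) (ex_intro _ z Az) (fun x Ax => Ax).
have xrj : (A *m xr) j 0 < b j 0 by apply: xrs; exists z.
pose th := (b j 0 - (A *m xr) j 0) / ((A *m y) j 0 - (A *m xr) j 0).
have th_gt0 : 0 < th by apply: divr_gt0; lra.
have th_lt1 : th < 1 by rewrite /th ltr_pdivrMr; lra.
have Ew i : (A *m (xr + th *: (y - xr))) i 0 =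
            (A *m xr) i 0 + th * ((A *m y) i 0 - (A *m xr) i 0).
  by rewrite mulmxDZ_entry mulmxB_entry.
have wj : (A *m (xr + th *: (y - xr))) j 0 = b j 0.
  by rewrite Ew /th divfK; [lra | apply/eqP => h; lra].
exists (xr + th *: (y - xr)); split=> // [i | i ij ex].
  have [-> | ij] := eqVneq i j; first by rewrite wj.
  by rewrite Ew; have := xrA i; have := yA i ij; nra.
by rewrite Ew; have := xrs i ex; have := yA i ij; nra.
Qed.

Lemma aff_indep_pts_row_face n p (A : 'M[R]_(p, n)) b j w t :
  hpoly A b w -> (A *m w) j 0 = b j 0 ->
  (forall i, i != j -> (exists2 y, hpoly A b y & (A *m y) i 0 < b i 0) ->
             (A *m w) i 0 < b i 0) ->
  aff_indep_pts (hpoly A b) t.+1 ->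
  aff_indep_pts (hpoly A b `&` hyperplane (row j A)^T (b j 0)) t.
Proof.
move=> Aw wj ws Qt.
pose implicit i := `[< forall y, hpoly A b y -> (A *m y) i 0 = b i 0 >].
pose B := \matrix_(i, k) (if implicit i then A i k else 0).
have BE r (V : 'M[R]_(n, r)) i l : (B *m V) i l = if implicit i then (A *m V) i l else 0.
  rewrite !mxE; case: ifP => impl; first by apply: eq_bigr => k _; rewrite mxE impl.
  by apply: big1 => k _; rewrite mxE impl mul0r.
have rankB : (\rank B + t.+1 <= n)%N.
  apply: aff_indep_pts_const_mxrank Qt => x y Ax Ay; apply/matrixP => i l.
  rewrite !BE (ord1 l); case: ifP => // /asboolP impl.
  by rewrite (impl _ Ax) (impl _ Ay).
have [r [X [MX rX rE]]] := mxrank_kernel (col_mx B (row j A)).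
have rankM : (\rank (col_mx B (row j A)) <= \rank B + 1)%N.
  rewrite -addsmxE; apply: leq_trans (mxrank_adds_leqif _ _).1 _.
  by rewrite leq_add2l rank_leq_row.
move: MX; rewrite mul_col_mx => /eqP; rewrite col_mx_eq0 => /andP[/eqP BX /eqP AjX].
have [e e_gt0 He] : exists2 e, 0 < e & forall l, hpoly A b (w + e *: col l X).
  apply: hpoly_perturb => // i.
  have [-> | ij] := eqVneq i j; first by right.
  case impl: (implicit i).
    right; apply/matrixP => a l; rewrite (ord1 a) -row_mul.
    by move/matrixP/(_ i l): BX; rewrite BE impl !mxE.
  left; apply: ws => //; apply: contrapT => nstrict.
  move/negbT/asboolP: impl; apply => y Ay; apply/eqP; rewrite eq_le Ay /= leNgt.
  by apply/negP => yi; apply: nstrict; exists y.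
apply: (aff_indep_pts_le (r := r)); first lia.
exists w, (e *: X); split; first by split; rewrite ?hyperplane_rowE.
split; last by rewrite mxrank_scale_nz ?rX //; apply/eqP => e0; lra.
move=> l; rewrite linearZ /=; split; first exact: He.
by rewrite hyperplane_rowE mulmxDZ_entry row_mulmx0_entry // mulr0 addr0.
Qed.

Lemma minimal_hpoly_row_facet n p (A : 'M[R]_(p, n)) b j z :
  minimal_hpoly A b -> hpoly A b z -> (A *m z) j 0 < b j 0 ->
  is_facet (hpoly A b) (hpoly A b `&` hyperplane (row j A)^T (b j 0)).
Proof.
move=> minA Az zj.
have [w [Aw wj ws]] := minimal_hpoly_row_face_point minA Az zj.
have Hjz : ~ hyperplane (row j A)^T (b j 0) z by rewrite hyperplane_rowE => zj'; lra.
have Q1 : aff_indep_pts (hpoly A b) 1.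
  apply: (aff_indep_pts_off_hyperplane (G := [set w]) _ _ _ Az Hjz) => [|x -> //|x ->].
    exists w, 0; split=> //; split; first by case.
    by apply/eqP; rewrite -leqn0 rank_leq_col.
  by rewrite hyperplane_rowE.
have [[|t] [Qt Qt'] //] := has_dim_geq Q1.
split.
  exists (row j A)^T, (b j 0); split=> // x Ax.
  by rewrite mulmx_row_entry; exact: Ax.
exists t; split; first by split.
split; first exact: aff_indep_pts_row_face Aw wj ws Qt.
by move=> Fj; apply: Qt'; apply: aff_indep_pts_off_hyperplane Fj _ _ Az Hjz => x [].
Qed.

Lemma section_face_tight_row n p (A : 'M[R]_(p, n)) b h eta c g z :
  let K := hpoly A b `&` hyperplane h eta in
  (forall x, K x -> (c^T *m x) 0 0 <= g) -> (K `&` hyperplane c g) !=set0 ->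
  K z -> (c^T *m z) 0 0 < g ->
  exists j, (forall y, (K `&` hyperplane c g) y -> (A *m y) j 0 = b j 0) /\
            (A *m z) j 0 < b j 0.
Proof.
move=> K valid G0 [Az Hz] cz; set G := K `&` hyperplane c g.
have Gmid x y : G x -> G y -> G (2^-1 *: (x + y)).
  move=> [[Ax Hx] cx] [[Ay Hy] cy].
  by split; [split; [exact: hpoly_mid | exact: hyperplane_mid] | exact: hyperplane_mid].
have [xg [[Axg Hxg] cxg] xgs] := exists_relint_point Gmid G0 (fun x Gx => Gx.1.1).
apply: contrapT => nj.
have [e e_gt0 He] : exists2 e, 0 < e & forall l, hpoly A b (xg + e *: col l (xg - z)).
  apply: hpoly_perturb => // i.
  have [ex | nex] := pselect (exists2 y, G y & (A *m y) i 0 < b i 0); first by left; exact: xgs.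
  have tight y : G y -> (A *m y) i 0 = b i 0.
    move=> Gy; apply/eqP; rewrite eq_le Gy.1.1 /= leNgt; apply/negP => yi.
    by apply: nex; exists y.
  have zi : (A *m z) i 0 = b i 0.
    apply/eqP; rewrite eq_le Az /= leNgt; apply/negP => zi; apply: nj.
    by exists i.
  right; apply/matrixP => a l; rewrite (ord1 a) (ord1 l) -row_mul mxE.
  by rewrite mulmxB_entry tight // zi subrr mxE.
have /valid : K (xg + e *: (xg - z)).
  split; first by have := He 0; rewrite col_id.
  by rewrite /hyperplane /= mulmxDZ_entry mulmxB_entry Hxg Hz subrr mulr0 addr0.
rewrite mulmxDZ_entry mulmxB_entry cxg.
have : 0 < e * (g - (c^T *m z) 0 0) by apply: mulr_gt0; lra.
lra.
Qed.

Lemma at_most_facets_hyperplane n (Q : set 'cV[R]_n) h eta m :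
  polyhedron Q -> at_most_facets Q m -> at_most_facets (Q `&` hyperplane h eta) m.
Proof.
move=> /polyhedron_minimal_hpoly [p [A [b [-> minA]]]] [fs Hfs].
set H := hyperplane h eta; set K := hpoly A b `&` H.
exists (fun i => fs i `&` H) => _ [[c [g [valid ->]]] [s [[Ks Ks'] [Gs Gs']]]].
have [z Kz Hcz] : exists2 z, K z & ~ hyperplane c g z.
  apply: contrapT => nz; apply: Gs'; apply: aff_indep_pts_sub Ks => x Kx.
  by split=> //; apply: contrapT => ncx; apply: nz; exists x.
have cz : (c^T *m z) 0 0 < g by rewrite lt_neqAle valid // andbT; apply/eqP.
have G0 : (K `&` hyperplane c g) !=set0 by case: Gs => x0 [X [Gx0 _]]; exists x0.
have [j [Gj zj]] := section_face_tight_row valid G0 Kz cz.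
have [i Fi] := Hfs _ (minimal_hpoly_row_facet minA Kz.1 zj).
set Hj := hyperplane (row j A)^T (b j 0).
have Hjz : ~ Hj z by rewrite /Hj hyperplane_rowE => zj'; lra.
exists i; rewrite -Fi; apply/seteqP; split.
  move=> y Gy; split; last exact: Gy.1.2.
  by split; [exact: Gy.1.1 | rewrite /Hj hyperplane_rowE; exact: Gj].
move=> y [[Ay Hjy] Hy]; apply: contrapT => nGy.
have Hcy : ~ hyperplane c g y by move=> cy; apply: nGy.
have FHs : aff_indep_pts ((hpoly A b `&` Hj) `&` H) s.+1.
  apply: aff_indep_pts_off_hyperplane Gs _ _ _ Hcy => // x [[Ax Hx] cx] //.
  by split=> //; split=> //; rewrite /Hj hyperplane_rowE; exact: Gj.
apply: Ks'; apply: aff_indep_pts_off_hyperplane FHs _ _ Kz Hjz => x [[Ax Hjx] Hx] //.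
Qed.

Lemma hpolyI n p1 p2 (A1 : 'M[R]_(p1, n)) b1 (A2 : 'M[R]_(p2, n)) b2 :
  hpoly A1 b1 `&` hpoly A2 b2 = hpoly (col_mx A1 A2) (col_mx b1 b2).
Proof.
apply/seteqP; split=> [x [A1x A2x] i | x Ax].
  by rewrite mul_col_mx -(splitK i); case: (split i) => k /=;
    rewrite ?col_mxEu ?col_mxEd.
by split=> k; [have := Ax (lshift p2 k) | have := Ax (rshift p1 k)];
  rewrite mul_col_mx ?col_mxEu ?col_mxEd.
Qed.

Lemma hyperplane_hpoly n (c : 'cV[R]_n) g :
  hyperplane c g = hpoly (col_mx c^T (- c^T)) (col_mx g%:M (- g)%:M).
Proof.
have oppE (M : 'M[R]_1) : (- M) 0 0 = - M 0 0 by rewrite mxE.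
have scalE (a : R) : a%:M 0 0 = a :> R by rewrite mxE mulr1n.
apply/seteqP; split=> [x cx i | x cx].
  rewrite mul_col_mx mulNmx -(splitK i); case: (split i) => k /=;
    by rewrite ?col_mxEu ?col_mxEd (ord1 k) ?oppE scalE cx lexx.
have := cx (lshift 1 0); have := cx (rshift 1 0).
rewrite mul_col_mx mulNmx !col_mxEu !col_mxEd oppE !scalE /hyperplane /=; lra.
Qed.

Lemma polyhedronI_hyperplane n (Q : set 'cV[R]_n) c g :
  polyhedron Q -> polyhedron (Q `&` hyperplane c g).
Proof.
move=> [p [A [b ->]]]; rewrite hyperplane_hpoly.
by exists (p + (1 + 1))%N, (col_mx A (col_mx c^T (- c^T))), (col_mx b (col_mx g%:M (- g)%:M)); exact: hpolyI.
Qed.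

Lemma is_affine_comp n p q (f : 'cV[R]_p -> 'cV[R]_q) (g : 'cV[R]_n -> 'cV[R]_p) :
  is_affine f -> is_affine g -> is_affine (f \o g).
Proof.
move=> [Mf [cf fE]] [Mg [cg gE]]; exists (Mf *m Mg), (Mf *m cg + cf) => x /=.
by rewrite fE gE mulmxDr mulmxA addrA.
Qed.

Lemma preimage_hyperplane n p (f : 'cV[R]_n -> 'cV[R]_p) c g : is_affine f ->
  exists h eta, f @^-1` hyperplane c g = hyperplane h eta.
Proof.
move=> [M [a fE]]; exists (c^T *m M)^T, (g - (c^T *m a) 0 0).
apply/seteqP; split=> x;
  by rewrite /hyperplane /= fE trmxK mulmxD_entry mulmxA; lra.
Qed.

Lemma affine_comb n p (f : 'cV[R]_n -> 'cV[R]_p) N (lam : 'I_N -> R) pts :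
  is_affine f -> \sum_(i < N) lam i = 1 ->
  f (\sum_(i < N) lam i *: pts i) = \sum_(i < N) lam i *: f (pts i).
Proof.
move=> [M [a fE]] lam1; rewrite fE mulmx_sumr.
under [RHS]eq_bigr do rewrite fE scalerDr.
rewrite big_split /= -scaler_suml lam1 scale1r; congr (_ + _).
by apply: eq_bigr => i _; rewrite scalemxAr.
Qed.

Lemma mulmx_sumZ_entry n (c : 'cV[R]_n) N (lam : 'I_N -> R) (pts : 'I_N -> 'cV[R]_n) :
  (c^T *m (\sum_(i < N) lam i *: pts i)) 0 0 = \sum_(i < N) lam i * (c^T *m pts i) 0 0.
Proof.
by rewrite mulmx_sumr summxE; apply: eq_bigr => i _; rewrite -scalemxAr mxE.
Qed.

Lemma sub_conv n (S : set 'cV[R]_n) : S `<=` conv S.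
Proof.
move=> x Sx; exists 1%N, (fun=> 1), (fun=> x).
by split=> //; split=> //; rewrite !big_ord1 scale1r.
Qed.

(* Points with zero weight are replaced by one of positive weight. *)
Lemma conv_comb n (S : set 'cV[R]_n) N (lam : 'I_N -> R) pts :
  (forall i, 0 <= lam i) -> \sum_(i < N) lam i = 1 ->
  (forall i, lam i != 0 -> S (pts i)) -> conv S (\sum_(i < N) lam i *: pts i).
Proof.
move=> lam_ge0 lam1 Spts.
have [i0 li0] : exists i0, lam i0 != 0.
  apply: contrapT => nz; move: lam1; rewrite big1 => [/eqP|i _].
    by rewrite eq_sym oner_eq0.
  by apply/eqP; apply: contrapT => li; apply: nz; exists i; apply/negP.
exists N, lam, (fun i => if lam i == 0 then pts i0 else pts i).
split=> [i | ]; first by case: eqP => [_ | /eqP]; apply: Spts.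
split=> //; split=> //; apply: eq_bigr => i _.
by case: eqP => // ->; rewrite !scale0r.
Qed.

Lemma conv_face n (S : set 'cV[R]_n) c g : (forall x, S x -> (c^T *m x) 0 0 <= g) ->
  conv S `&` hyperplane c g = conv (S `&` hyperplane c g).
Proof.
move=> valid; apply/seteqP; split.
  move=> _ [[N [lam [pts [Spts [lam_ge0 [lam1 ->]]]]]]].
  rewrite /hyperplane /= mulmx_sumZ_entry => cx.
  apply: conv_comb => // i li; split=> //.
  have gap_ge0 j : 0 <= lam j * (g - (c^T *m pts j) 0 0).
    by rewrite mulr_ge0 // subr_ge0; exact: valid.
  have : \sum_(j < N) lam j * (g - (c^T *m pts j) 0 0) = 0.
    under eq_bigr do rewrite mulrBr.
    by rewrite sumrB -mulr_suml lam1 mul1r cx subrr.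
  move=> /(psumr_eq0P (fun j _ => gap_ge0 j)) /(_ i isT) /eqP.
  by rewrite mulf_eq0 (negPf li) subr_eq0 /hyperplane /= => /eqP <-.
move=> _ [N [lam [pts [Spts [lam_ge0 [lam1 ->]]]]]]; split.
  by exists N, lam, pts; split=> // i; exact: (Spts i).1.
rewrite /hyperplane /= mulmx_sumZ_entry.
under eq_bigr => i _ do rewrite (Spts i).2.
by rewrite -mulr_suml lam1 mul1r.
Qed.

Lemma conv_affine_image n p (f : 'cV[R]_n -> 'cV[R]_p) (S : set 'cV[R]_n) :
  is_affine f -> f @` conv S = conv (f @` S).
Proof.
move=> aff_f; apply/seteqP; split.
  move=> _ [_ [N [lam [pts [Spts [lam_ge0 [lam1 ->]]]]]] <-].
  exists N, lam, (f \o pts); split=> [i|]; first by exists (pts i).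
  by rewrite affine_comb.
move=> _ [N [lam [pts [Spts [lam_ge0 [lam1 ->]]]]]].
have /choice [q qE] : forall i, exists y, S y /\ f y = pts i.
  by move=> i; have [y Sy <-] := Spts i; exists y.
exists (\sum_(i < N) lam i *: q i); first by exists N, lam, q; split=> // i; exact: (qE i).1.
by rewrite affine_comb //; apply: eq_bigr => i _; rewrite (qE i).2.
Qed.

End Polyhedra.

Theorem mainTheorem12 (R : realType) (d d' m k : nat)
  (P : set 'cV[R]_d) (P' : set 'cV[R]_d') :
  polyhedron P -> polyhedron P' -> P !=set0 -> P' !=set0 ->
  (exists (F : set 'cV[R]_d) (f : 'cV[R]_d -> 'cV[R]_d'),
      is_face P F /\ is_affine f /\ P' = f @` F) ->
  has_MILEF m k P -> has_MILEF m k P'.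
Proof.
move=> _ _ _ _ [_ [f [[c [g [valid ->]]] [aff_f ->]]]].
move=> [l [Q [sigma [pi [polyQ [facetsQ [aff_sigma [aff_pi PE]]]]]]]]; subst P.
have [h [eta piH]] := preimage_hyperplane c g aff_pi.
exists l, (Q `&` hyperplane h eta), sigma, (f \o pi).
split; first exact: polyhedronI_hyperplane.
split; first exact: at_most_facets_hyperplane.
split=> //; split; first exact: is_affine_comp.
set S := pi @` _ in valid *.
have -> : [set x | conv S x /\ (c^T *m x) 0 0 = g] = conv (S `&` hyperplane c g).
  by rewrite -conv_face // => x Sx; apply: valid; exact: sub_conv.
rewrite conv_affine_image // -image_comp -piH.
congr (conv (f @` _)); apply/seteqP; split.
  by move=> _ [[y [Qy Zy] <-] Hy]; exists y.
by move=> _ [y [[Qy Hy] Zy] <-]; split=> //; exists y.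
Qed.
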